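(* The $k$-linear category $k[\Delta_{\mathrm{inj}}]$ is free as a left and as a right $u_\Delta(\Omega)$-module, where $u_\Delta(\Omega)$ denotes the image of the $k$-linear functor $u_\Delta\colon\Omega\to k[\Delta_{\mathrm{inj}}]$.
   Context: Let $k$ be a field. For a small category $\mathcal C$, $k[\mathcal C]$ is its $k$-linearization: same objects, $k[\mathcal C](x,y)$ the $k$-vector space with basis $\mathrm{Hom}_{\mathcal C}(x,y)$, composition extended bilinearly. $\Delta_{\mathrm{inj}}$ is the category with objects $[n]=\{0<1<\dots<n\}$, $n\ge 0$, and injective order-preserving maps as morphisms; for $0\le i\le n$, $\delta^i\colon[n-1]\to[n]$ is the injective order-preserving map omitting $i$. $\Omega$ is the $k$-linear category with objects $[n]$, $n\ge0$, generated by arrows $d_n\colon[n-1]\to[n]$ for $n\ge1$ subject only to the relations $d_{n+1}d_n=0$. The $k$-linear functor $u_\Delta\colon\Omega\to k[\Delta_{\mathrm{inj}}]$ is the identity on objects and sends $d_n\mapsto\sum_{i=0}^n(-1)^i\delta^i$. *)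

From HB Require Import structures.
From mathcomp Require Import all_boot all_order all_algebra.
From mathcomp Require Import zify.
Set Implicit Arguments. Unset Strict Implicit. Unset Printing Implicit Defensive.
Import GRing.Theory.
Local Open Scope ring_scope.

(* Objects: [n] = {0 < ... < n}, encoded by n : nat, carrier 'I_n.+1.
   Morphisms [m] -> [n]: strictly increasing maps 'I_m.+1 -> 'I_n.+1. *)
Definition incr (m n : nat) (f : {ffun 'I_m.+1 -> 'I_n.+1}) : bool :=
  [forall i : 'I_m.+1, forall j : 'I_m.+1, (i < j)%N ==> (f i < f j)%N].

Definition Hom (m n : nat) := {f : {ffun 'I_m.+1 -> 'I_n.+1} | incr f}.

Lemma incr_comp m n p (a : {ffun 'I_m.+1 -> 'I_n.+1}) (b : {ffun 'I_n.+1 -> 'I_p.+1}) :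
  incr a -> incr b -> incr [ffun i => b (a i)].
Proof.
move=> /forallP Ha /forallP Hb; apply/forallP=> i; apply/forallP=> j.
apply/implyP=> ij; rewrite !ffunE.
have /forallP/(_ j)/implyP/(_ ij) := Ha i => aij.
by have /forallP/(_ (a j))/implyP/(_ aij) := Hb (a i).
Qed.

Definition hcomp m n p (b : Hom n p) (a : Hom m n) : Hom m p :=
  exist _ [ffun i => val b (val a i)] (incr_comp (valP a) (valP b)).

Lemma incr_id m : incr [ffun i : 'I_m.+1 => i].
Proof. by apply/forallP=> i; apply/forallP=> j; rewrite !ffunE; apply/implyP. Qed.

Definition idHom m : Hom m m := exist _ [ffun i => i] (incr_id m).

Lemma incr_lift p (i : 'I_p.+2) : incr [ffun j : 'I_p.+1 => lift i j].
Proof.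
apply/forallP=> j; apply/forallP=> l; apply/implyP=> jl; rewrite !ffunE /=.
rewrite /bump; case: (leqP i j); case: (leqP i l); lia.
Qed.

Definition coface p (i : 'I_p.+2) : Hom p p.+1 :=
  exist _ [ffun j : 'I_p.+1 => lift i j] (incr_lift i).

Section Lin.
Variable k : fieldType.

(* k[Delta_inj]([m],[n]) = k-vector space with basis Hom m n
   (finite, so = all functions Hom m n -> k) *)
Local Notation kHom m n := {ffun Hom m n -> k^o}.

Definition comp m n p (g : kHom n p) (f : kHom m n) : kHom m p :=
  [ffun h => \sum_(a : Hom m n) \sum_(b : Hom n p | hcomp b a == h) g b * f a].

Definition kid m : kHom m m := [ffun h => (h == idHom m)%:R].

(* d_{p+1} |-> sum_{i=0}^{p+1} (-1)^i delta^i  in k[Delta_inj]([p],[p+1]) *)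
Definition bd p : kHom p p.+1 :=
  [ffun h => \sum_(i < p.+2) (-1) ^+ i * (h == coface i)%:R].

(* u_Delta of the path d_{d+m} o ... o d_{m+1} : [m] -> [d+m] *)
Fixpoint dpath m d : kHom m (d + m) :=
  match d return kHom m (d + m) with
  | 0 => kid m
  | d'.+1 => comp (bd (d' + m)) (dpath m d')
  end.

(* u_Delta applied to the (unique up to scalar) spanning path of Omega([z],[y]):
   the composite of boundaries if z <= y, and 0 (Omega([z],[y]) = 0) otherwise *)
Definition upath z y : kHom z y :=
  (if (z <= y)%N as b return (z <= y)%N = b -> kHom z y
   then fun h => ecast n (kHom z n) (subnK h) (dpath z (y - z))
   else fun _ => 0) (erefl _).

Definition in_image z y (a : kHom z y) : Prop := exists c : k, a = c *: upath z y.

(* k[Delta_inj] is free as a LEFT u_Delta(Omega)-module: for each source [x],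
   the left module [y] |-> k[Delta_inj]([x],[y]) (action by postcomposition)
   has a basis: generators gen z in k[Delta_inj]([x],[z]) such that every
   f : [x] -> [y] is uniquely sum_{z,j} a_{z,j} o gen_{z,j} with a_{z,j} in the
   image.  (Degrees z > y contribute nothing since k[Delta_inj]([z],[y]) = 0.) *)
Definition left_free : Prop :=
  forall x : nat, exists gen : forall z : nat, seq (kHom x z),
  forall y : nat,
    (forall f : kHom x y, exists a : (forall z : 'I_y.+1, 'I_(size (gen z)) -> kHom z y),
        (forall z j, in_image (a z j)) /\
        f = \sum_(z < y.+1) \sum_(j < size (gen z)) comp (a z j) (nth 0 (gen z) j)) /\
    (forall a : forall z : 'I_y.+1, 'I_(size (gen z)) -> kHom z y,
        (forall z j, in_image (a z j)) ->
        \sum_(z < y.+1) \sum_(j < size (gen z)) comp (a z j) (nth 0 (gen z) j) = 0 ->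
        forall z j, a z j = 0).

(* free as a RIGHT module: for each target [y], the right module
   [x] |-> k[Delta_inj]([x],[y]) (action by precomposition) has a basis
   gen z in k[Delta_inj]([z],[y]); z > y is irrelevant as that space is 0. *)
Definition right_free : Prop :=
  forall y : nat, exists gen : forall z : nat, seq (kHom z y),
  forall x : nat,
    (forall f : kHom x y, exists a : (forall z : 'I_y.+1, 'I_(size (gen z)) -> kHom x z),
        (forall z j, in_image (a z j)) /\
        f = \sum_(z < y.+1) \sum_(j < size (gen z)) comp (nth 0 (gen z) j) (a z j)) /\
    (forall a : forall z : 'I_y.+1, 'I_(size (gen z)) -> kHom x z,
        (forall z j, in_image (a z j)) ->
        \sum_(z < y.+1) \sum_(j < size (gen z)) comp (nth 0 (gen z) j) (a z j) = 0 ->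
        forall z j, a z j = 0).
End Lin.

(* The image of u_Delta from [z] to [y] is spanned by [upath z y], which is the
   identity for z = y, the alternating coface sum [bd] for z = y - 1, and 0
   otherwise since bd bd = 0.  So a u_Delta(Omega)-combination of generators
   landing in k[Delta_inj]([x],[y]) has the form b + bd c, where b combines the
   generators of degree y and c those of degree y - 1 (for the right action:
   degrees x and x + 1).  The complexes k[Delta_inj]([x],-) and
   k[Delta_inj](-,[y]), with differential composition with bd, are exact:
   restriction along the top coface, resp. coning off at the vertex 0, is a
   contracting homotopy.  Choose as generators of degree z a basis of a
   complement of the boundaries in degree z; by exactness this is also a
   complement of the cycles, so every element is uniquely b + bd c with b and c
   in the spans of the generators. *)

From HB Require Import structures.
From mathcomp Require Import all_boot all_order all_algebra.
From mathcomp Require Import zify.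

Set Implicit Arguments.
Unset Strict Implicit.
Unset Printing Implicit Defensive.

Import GRing.Theory.
Local Open Scope ring_scope.

Section ImageKernelComplements.
Variables (K : fieldType) (V W : vectType K) (Q : 'Hom(V, W)).

Lemma limg_lker_compl_decomp w :
  exists2 b, b \in (limg Q)^C%VS & exists2 v, v \in (lker Q)^C%VS & w = b + Q v.
Proof.
have : w \in (limg Q + (limg Q)^C%VS)%VS by rewrite addv_complf memvf.
case/memv_addP=> _ /memv_imgP[u _ ->] [b bC ->].
have : u \in (lker Q + (lker Q)^C%VS)%VS by rewrite addv_complf memvf.
case/memv_addP=> u0 u0K [v vC ->].
exists b => //; exists v => //.
by move: u0K; rewrite memv_ker linearD => /eqP /= ->; rewrite add0r addrC.
Qed.

Lemma limg_lker_compl_decomp_eq0 b v :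
  b \in (limg Q)^C%VS -> v \in (lker Q)^C%VS -> b + Q v = 0 -> b = 0 /\ v = 0.
Proof.
move=> bC vC bQv0; have Qv : Q v = - b by apply/eqP; rewrite -addr_eq0 addrC bQv0.
have b0 : b = 0.
  apply/eqP; rewrite -memv0 -(capv_compl (limg Q)) memv_cap bC andbT.
  by rewrite -[b]opprK -Qv -linearN memv_img ?memvf.
split=> //; apply/eqP; rewrite -memv0 -(capv_compl (lker Q)) memv_cap vC andbT.
by rewrite memv_ker Qv b0 oppr0.
Qed.

End ImageKernelComplements.

Section VbasisCoordinates.
Variables (K : fieldType) (T : vectType K) (U : {vspace T}).
Local Notation B := (vbasis U : seq T).

Lemma coord_vbasis_nat v : v \in U ->
  exists al : nat -> K, v = \sum_(i < size B) al i *: B`_i.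
Proof.
have /andP[/eqP spanB _] := vbasisP U.
rewrite -{1}spanB -{1}[B]in_tupleE => /coord_span ->.
exists (fun i => oapp (coord (in_tuple B) ^~ v) 0 (insub i)).
by apply: eq_bigr => i _; rewrite valK.
Qed.

Lemma free_vbasis_coord (al : 'I_(size B) -> K) :
  \sum_i al i *: B`_i = 0 -> forall i, al i = 0.
Proof. exact: (elimT (@freeP _ _ _ (in_tuple B)) (basis_free (vbasisP U))). Qed.

Lemma vbasis_comb_mem (al : 'I_(size B) -> K) : \sum_i al i *: B`_i \in U.
Proof. by apply: memv_suml => i _; apply/memvZ/vbasis_mem/mem_nth. Qed.

End VbasisCoordinates.

Lemma eq_hom m n (a b : Hom m n) : (forall j, val a j = val b j :> nat) -> a = b.
Proof. by move=> eq_ab; apply/val_inj/ffunP=> j; apply/val_inj/eq_ab. Qed.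

Lemma hcompE m n p (b : Hom n p) (a : Hom m n) j : val (hcomp b a) j = val b (val a j).
Proof. exact: ffunE. Qed.

Lemma idHomE m j : val (idHom m) j = j.
Proof. exact: ffunE. Qed.

Lemma cofaceE p (i : 'I_p.+2) j : val (coface i) j = lift i j.
Proof. exact: ffunE. Qed.

Lemma hom_lt m n (a : Hom m n) (i j : 'I_m.+1) : (i < j)%N -> (val a i < val a j)%N.
Proof. by case: a => f /= /forallP/(_ i)/forallP/(_ j)/implyP. Qed.

Lemma hom_le m n (a : Hom m n) (i j : 'I_m.+1) : (i <= j)%N -> (val a i <= val a j)%N.
Proof. by rewrite leq_eqVlt => /predU1P[/val_inj -> | /(hom_lt a)/ltnW]. Qed.

Lemma hom_inj m n (a : Hom m n) : injective (val a).
Proof.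
move=> i j eq_aij; case: (ltngtP i j) => [/(hom_lt a) | /(hom_lt a) | /val_inj //];
  by rewrite eq_aij ltnn.
Qed.

Lemma leq_hom m n (a : Hom m n) (i : 'I_m.+1) : (i <= val a i)%N.
Proof.
case: i => i; elim: i => // i IH lt_i1m.
have := hom_lt a (i := Ordinal (ltnW lt_i1m)) (j := Ordinal lt_i1m) (ltnSn i).
by have := IH (ltnW lt_i1m); simpl; lia.
Qed.

Lemma hom_leq m n : Hom m n -> (m <= n)%N.
Proof. by move=> a; have := leq_hom a ord_max; have := ltn_ord (val a ord_max); simpl; lia. Qed.

Lemma hcompA m n p q (c : Hom p q) (b : Hom n p) (a : Hom m n) :
  hcomp c (hcomp b a) = hcomp (hcomp c b) a.
Proof. by apply: eq_hom => j; rewrite !hcompE. Qed.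

Lemma hcomp_idl m n (a : Hom m n) : hcomp (idHom n) a = a.
Proof. by apply: eq_hom => j; rewrite hcompE idHomE. Qed.

Lemma hcomp_idr m n (a : Hom m n) : hcomp a (idHom m) = a.
Proof. by apply: eq_hom => j; rewrite hcompE idHomE. Qed.

Lemma hcomp_inj m n p (c : Hom n p) : injective (@hcomp m n p c).
Proof.
move=> a b eq_cab; apply: eq_hom => j; congr nat_of_ord.
by apply: (@hom_inj _ _ c); rewrite -!hcompE eq_cab.
Qed.

Lemma coface_comm p (i j : 'I_p.+2) (i' j' : 'I_p.+3) :
  (j <= i)%N -> val i' = i.+1 -> val j' = j ->
  hcomp (coface i') (coface j) = hcomp (coface j') (coface i).
Proof.
move=> le_ji i'E j'E; apply: eq_hom => t; rewrite !hcompE !cofaceE /= i'E j'E bumpC.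
have -> : bump i.+1 j = j by rewrite /bump leqNgt ltnS le_ji.
by rewrite /unbump ltnS le_ji subn1.
Qed.

Lemma lift_lift0 p (i : 'I_p.+1) : lift (lift ord0 i) ord0 = ord0 :> 'I_p.+2.
Proof. exact: val_inj. Qed.

Lemma hom_top_cases m n (h : Hom m n.+1) :
  (exists t, val (val h t) = n.+1) \/ exists h', h = hcomp (coface ord_max) h'.
Proof.
case: (pickP (fun t => val (val h t) == n.+1)) => [t /eqP hit|miss]; first by left; exists t.
have lt_h t : (val (val h t) < n.+1)%N.
  by rewrite ltn_neqAle leq_ord andbT; apply/negbT/miss.
have incr_h' : incr [ffun t => (inord (val (val h t)) : 'I_n.+1)].
  apply/forallP=> i; apply/forallP=> j; apply/implyP=> lt_ij.
  by rewrite !ffunE !inordK ?lt_h //; apply: hom_lt.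
right; exists (exist (fun f => incr f) _ incr_h'); apply: eq_hom => t.
by rewrite hcompE cofaceE /= ffunE /= inordK ?lt_h // /bump leqNgt lt_h.
Qed.

Lemma cone_unique m n (g g' : Hom m.+1 n) :
  val (val g ord0) = 0%N -> val (val g' ord0) = 0%N ->
  hcomp g (coface ord0) = hcomp g' (coface ord0) -> g = g'.
Proof.
move=> g0 g'0 eq_gg'; apply: eq_hom => t.
case: (unliftP ord0 t) => [t'|] ->; last by rewrite g0 g'0.
by rewrite -!cofaceE -!hcompE eq_gg'.
Qed.

Lemma cone_exists m n (a : Hom m n) : val (val a ord0) != 0%N ->
  exists2 g : Hom m.+1 n, val (val g ord0) = 0%N & hcomp g (coface ord0) = a.
Proof.
move=> a0; pose g := [ffun t => if unlift ord0 t is Some t' then val a t' else ord0].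
have incr_g : incr g.
  apply/forallP=> i; apply/forallP=> j; apply/implyP; rewrite !ffunE.
  case: (unliftP ord0 i) => [i'|] ->; case: (unliftP ord0 j) => [j'|] -> //=.
    by rewrite /bump /= !add1n ltnS; apply: hom_lt.
  by move=> _; rewrite (leq_trans _ (hom_le a (i := ord0) (j := j') (leq0n _))) // lt0n.
exists (exist (fun f => incr f) g incr_g); first by rewrite /= ffunE unlift_none.
by apply: eq_hom => t; rewrite hcompE cofaceE /= ffunE liftK.
Qed.

Lemma simplicial_sum_eq0 (R : pzRingType) (V : lmodType R) n (G : nat -> nat -> V) :
  (forall i j, (j <= i < n)%N -> G i.+1 j = G j i) ->
  \sum_(i < n.+1) \sum_(j < n) (-1) ^+ i *: ((-1) ^+ j *: G i j) = 0.
Proof.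
elim: n => [|n IH] G_sym; first by rewrite big1 // => i _; rewrite big_ord0.
rewrite big_ord_recr /=.
under eq_bigr => i _ do rewrite big_ord_recr /=.
rewrite big_split /= IH ?add0r => [|i j /andP[le_ji lt_in]]; last by apply: G_sym; lia.
rewrite -big_split big1 //= => i _; rewrite G_sym ?leq_ord ?ltnSn //.
by rewrite !scalerA exprS mulN1r mulNr scaleNr -!exprD addnC subrr.
Qed.

Section Linearization.
Variable k : fieldType.
Local Notation kHom m n := {ffun Hom m n -> k^o}.

Lemma scale_regularE (c x : k) : c *: (x : k^o) = c * x.
Proof. by []. Qed.

Definition ebasis m n (a : Hom m n) : kHom m n := [ffun h => (h == a)%:R].

Lemma kHom_expand m n (f : kHom m n) : f = \sum_a f a *: ebasis a.
Proof.
apply/ffunP=> h; rewrite sum_ffunE (bigD1 h) //= big1 => [|a /negbTE ha].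
  by rewrite !ffunE eqxx scale_regularE mulr1 addr0.
by rewrite !ffunE eq_sym ha scale_regularE mulr0.
Qed.

Lemma kHom_eq0 m n (f : kHom m n) : (n < m)%N -> f = 0.
Proof. by move=> lt_nm; apply/ffunP=> a; have := hom_leq a; rewrite leqNgt lt_nm. Qed.

Fact comp_is_linear m n p (g : kHom n p) : linear (@comp k m n p g).
Proof.
move=> c f1 f2; apply/ffunP=> h; rewrite !ffunE scale_regularE mulr_sumr -big_split /=.
apply: eq_bigr => a _; rewrite mulr_sumr -big_split; apply: eq_bigr => b _ /=.
by rewrite !ffunE mulrDr mulrCA.
Qed.
HB.instance Definition _ m n p g :=
  GRing.isLinear.Build k (kHom m n) (kHom m p) _ (@comp k m n p g) (comp_is_linear g).

Definition compr m n p (f : kHom m n) (g : kHom n p) : kHom m p := comp g f.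

Fact compr_is_linear m n p (f : kHom m n) : linear (@compr m n p f).
Proof.
move=> c g1 g2; apply/ffunP=> h; rewrite !ffunE scale_regularE mulr_sumr -big_split /=.
apply: eq_bigr => a _; rewrite mulr_sumr -big_split; apply: eq_bigr => b _ /=.
by rewrite !ffunE mulrDl mulrA.
Qed.
HB.instance Definition _ m n p f :=
  GRing.isLinear.Build k (kHom n p) (kHom m p) _ (@compr m n p f) (compr_is_linear f).

Lemma comp_suml m n p (f : kHom m n) I (r : seq I) (P : pred I) (F : I -> kHom n p) :
  comp (\sum_(i <- r | P i) F i) f = \sum_(i <- r | P i) comp (F i) f.
Proof. exact: (linear_sum (compr f)). Qed.

Lemma compZl m n p (f : kHom m n) c (g : kHom n p) : comp (c *: g) f = c *: comp g f.
Proof. exact: (linearZZ (compr f)). Qed.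

Lemma comp0l m n p (f : kHom m n) : comp (0 : kHom n p) f = 0.
Proof. exact: (linear0 (compr f)). Qed.

Lemma comp_ebasis m n p (b : Hom n p) (a : Hom m n) :
  comp (ebasis b) (ebasis a) = ebasis (hcomp b a).
Proof.
apply/ffunP=> h; rewrite !ffunE (bigD1 a) //= [X in _ + X]big1 => [|a' /negbTE ne_a'a]; last first.
  by rewrite big1 // => b' _; rewrite !ffunE ne_a'a mulr0.
rewrite addr0; case: (eqVneq (hcomp b a) h) => [<-|ne_bah].
  rewrite (bigD1 b) //= big1 => [|b' /andP[_ /negbTE ne_b'b]]; last first.
    by rewrite !ffunE ne_b'b mul0r.
  by rewrite !ffunE !eqxx mulr1 addr0.
rewrite big1 // => b' /eqP eq_b'ah; rewrite !ffunE.
by case: eqVneq => [eq_b'b|_]; [case/eqP: ne_bah; rewrite -eq_b'ah eq_b'b | rewrite mul0r].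
Qed.

Lemma compA m n p q (h : kHom p q) (g : kHom n p) (f : kHom m n) :
  comp h (comp g f) = comp (comp h g) f.
Proof.
rewrite [f]kHom_expand !linear_sum; apply: eq_bigr => a _; rewrite !linearZ /=; congr (_ *: _).
rewrite [g]kHom_expand !(comp_suml, linear_sum); apply: eq_bigr => b _.
rewrite !(compZl, linearZ) /=; congr (_ *: _).
rewrite [h]kHom_expand !comp_suml; apply: eq_bigr => c _.
by rewrite !compZl !comp_ebasis hcompA.
Qed.

Lemma comp_kidl m n (f : kHom m n) : comp (kid k n) f = f.
Proof.
rewrite [f in RHS]kHom_expand [f in LHS]kHom_expand linear_sum.
by apply: eq_bigr => a _; rewrite linearZ /= comp_ebasis hcomp_idl.
Qed.

Lemma comp_kidr m n (f : kHom m n) : comp f (kid k m) = f.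
Proof.
rewrite [f in RHS]kHom_expand [f in LHS]kHom_expand comp_suml.
by apply: eq_bigr => a _; rewrite compZl comp_ebasis hcomp_idr.
Qed.

Lemma bdE p : bd k p = \sum_(i < p.+2) (-1) ^+ i *: ebasis (coface i).
Proof. by apply/ffunP=> h; rewrite sum_ffunE ffunE; apply: eq_bigr => i _; rewrite !ffunE. Qed.

Lemma comp_bd_ebasis p m (a : Hom m p) :
  comp (bd k p) (ebasis a) = \sum_(i < p.+2) (-1) ^+ i *: ebasis (hcomp (coface i) a).
Proof. by rewrite bdE comp_suml; apply: eq_bigr => i _; rewrite compZl comp_ebasis. Qed.

Lemma comp_ebasis_bd p n (b : Hom p.+1 n) :
  comp (ebasis b) (bd k p) = \sum_(i < p.+2) (-1) ^+ i *: ebasis (hcomp b (coface i)).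
Proof. by rewrite bdE linear_sum; apply: eq_bigr => i _; rewrite linearZ /= comp_ebasis. Qed.

Lemma bd_bd p : comp (bd k p.+1) (bd k p) = 0.
Proof.
rewrite [bd k p]bdE linear_sum.
under eq_bigr => j _ do rewrite linearZ /= comp_bd_ebasis scaler_sumr.
rewrite exchange_big /=.
pose G i j := ebasis (hcomp (coface (inord i : 'I_p.+3)) (coface (inord j : 'I_p.+2))).
rewrite -[RHS](@simplicial_sum_eq0 _ _ p.+2 G) => [|i j /andP[le_ji lt_ip]]; last first.
  by rewrite /G; congr ebasis; apply: coface_comm; rewrite /= ?inordK //; lia.
apply: eq_bigr => i _; apply: eq_bigr => j _.
by rewrite scalerA mulrC -scalerA /G !inord_val.
Qed.

Lemma sum_compZl m n p (g : kHom n p) (s : seq (kHom m n)) (c : 'I_(size s) -> k) :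
  \sum_j comp (c j *: g) s`_j = comp g (\sum_j c j *: s`_j).
Proof. by rewrite linear_sum; apply: eq_bigr => j _; rewrite compZl linearZ. Qed.

Lemma sum_compZr m n p (f : kHom m n) (s : seq (kHom n p)) (c : 'I_(size s) -> k) :
  \sum_(j < size s) comp s`_j (c j *: f) = comp (\sum_j c j *: s`_j) f.
Proof. by rewrite comp_suml; apply: eq_bigr => j _; rewrite compZl linearZ. Qed.

Lemma upath_le z y (le_zy : (z <= y)%N) :
  upath k z y = ecast n (kHom z n) (subnK le_zy) (dpath k z (y - z)).
Proof.
rewrite /upath; move: (erefl (z <= y)%N); rewrite {2 3}le_zy => e.
by rewrite (eq_irrelevance e le_zy).
Qed.

Lemma upath_gt z y : (y < z)%N -> upath k z y = 0.
Proof.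
rewrite ltnNge => /negbTE gt_zy.
by rewrite /upath; move: (erefl (z <= y)%N); rewrite {2 3}gt_zy.
Qed.

Lemma upath_id z : upath k z z = kid k z.
Proof.
rewrite upath_le; move: (subnK _); rewrite subnn => e.
by rewrite (eq_irrelevance e (erefl z)).
Qed.

Lemma upath_bd z : upath k z z.+1 = bd k z.
Proof.
rewrite upath_le; move: (subnK _); rewrite subSnn => e.
by rewrite (eq_irrelevance e (erefl z.+1)) /= comp_kidr.
Qed.

Lemma dpath_eq0 z t : (2 <= t)%N -> dpath k z t = 0.
Proof. by case: t => [|[|t]] // _; rewrite /= compA bd_bd comp0l. Qed.

Lemma upath_far z y : (z.+2 <= y)%N -> upath k z y = 0.
Proof.
move=> le_z2y; rewrite (upath_le (ltnW (ltnW le_z2y))) dpath_eq0 ?leq_subRL ?addn2 //.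
  by move: (subnK _); move: (y - z + z)%N => n e; case: y / e le_z2y.
exact: ltnW (ltnW le_z2y).
Qed.

Definition contractL x y (g : kHom x y.+1) : kHom x y :=
  [ffun h => (-1) ^+ y.+1 * g (hcomp (coface ord_max) h)].

Fact contractL_is_linear x y : linear (@contractL x y).
Proof. by move=> c g1 g2; apply/ffunP=> h; rewrite !ffunE scale_regularE mulrDr mulrCA. Qed.
HB.instance Definition _ x y :=
  GRing.isLinear.Build k (kHom x y.+1) (kHom x y) *:%R (@contractL x y) (@contractL_is_linear x y).

Lemma contractL_coface x y (h : Hom x y) :
  contractL (ebasis (hcomp (coface ord_max) h)) = (-1) ^+ y.+1 *: ebasis h.
Proof. by apply/ffunP=> g; rewrite !ffunE (inj_eq (@hcomp_inj _ _ _ _)). Qed.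

Lemma contractL_hit x y (g : Hom x y.+1) t : val (val g t) = y.+1 -> contractL (ebasis g) = 0.
Proof.
move=> hit; apply/ffunP=> h; rewrite !ffunE; case: eqP => [eq_hg|]; last by rewrite mulr0.
have : val (val g t) = val (val h t) by rewrite -eq_hg hcompE cofaceE; apply: lift_max.
by rewrite hit => hit_h; have := ltn_ord (val h t); rewrite -hit_h ltnn.
Qed.

Lemma contractL_bd_hit x y (h : Hom x y) t :
  val (val h t) = y -> contractL (comp (bd k y) (ebasis h)) = ebasis h.
Proof.
move=> hit; rewrite comp_bd_ebasis linear_sum big_ord_recr /= big1 ?add0r => [|i _].
  by rewrite linearZ /= contractL_coface signrZK.
rewrite linearZ /= (@contractL_hit _ _ _ t) ?scaler0 //.
by rewrite hcompE cofaceE /= hit /bump leq_ord.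
Qed.

Lemma contractL_homotopy_coface x y (h : Hom x y) (g : Hom x y.+1) :
  g = hcomp (coface ord_max) h ->
  contractL (comp (bd k y.+1) (ebasis g)) + comp (bd k y) (contractL (ebasis g)) = ebasis g.
Proof.
move=> ->; rewrite comp_bd_ebasis linear_sum big_ord_recr /= linearZ /= contractL_coface.
rewrite signrZK addrAC [X in X + _ = _](_ : _ = 0) ?add0r //.
rewrite contractL_coface linearZ /= comp_bd_ebasis scaler_sumr -big_split big1 //= => i _.
rewrite hcompA -(@coface_comm _ ord_max i ord_max (widen_ord (leqnSn _) i)) //=; last first.
  by rewrite -ltnS.
rewrite -hcompA linearZ /= contractL_coface !(@scalerA k) -!exprD addnC.
by rewrite exprS mulN1r scaleNr addNr.
Qed.

Lemma contractL_homotopy x y (f : kHom x y.+1) :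
  contractL (comp (bd k y.+1) f) + comp (bd k y) (contractL f) = f.
Proof.
rewrite [f in RHS]kHom_expand [f in LHS]kHom_expand !linear_sum -big_split.
apply: eq_bigr => a _ /=; rewrite !linearZ /= -scalerDr; congr (_ *: _).
have [[t hit] | [h eq_a]] := hom_top_cases a; last exact: contractL_homotopy_coface eq_a.
by rewrite (contractL_hit hit) linear0 addr0 (contractL_bd_hit hit).
Qed.

Lemma contractL_homotopy0 x (f : kHom x 0) : contractL (comp (bd k 0) f) = f.
Proof.
rewrite [f in RHS]kHom_expand [f in LHS]kHom_expand !linear_sum; apply: eq_bigr => a _ /=.
by rewrite !linearZ /= (@contractL_bd_hit _ _ _ ord0) //; case: (val a ord0) => [[]].
Qed.

Definition contractR x n (F : kHom x n) : kHom x.+1 n :=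
  [ffun g : Hom x.+1 n => (val (val g ord0) == 0%N)%:R * F (hcomp g (coface ord0))].

Fact contractR_is_linear x n : linear (@contractR x n).
Proof. by move=> c F1 F2; apply/ffunP=> g; rewrite !ffunE scale_regularE mulrDr mulrCA. Qed.
HB.instance Definition _ x n :=
  GRing.isLinear.Build k (kHom x n) (kHom x.+1 n) *:%R (@contractR x n) (@contractR_is_linear x n).

Lemma contractR_cone x n (g : Hom x.+1 n) :
  val (val g ord0) = 0%N -> contractR (ebasis (hcomp g (coface ord0))) = ebasis g.
Proof.
move=> g0; apply/ffunP=> g'; rewrite !ffunE.
case: (eqVneq g' g) => [-> | ne_g'g]; first by rewrite g0 !eqxx mulr1.
case: eqP => [g'0|]; last by rewrite mul0r.
case: eqP => [eq_g'g|]; last by rewrite mulr0.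
by case/eqP: ne_g'g; apply: cone_unique.
Qed.

Lemma contractR_eq0 x n (a : Hom x n) : val (val a ord0) = 0%N -> contractR (ebasis a) = 0.
Proof.
move=> a0; apply/ffunP=> g; rewrite !ffunE.
case: eqP => [g0|]; last by rewrite mul0r.
case: eqP => [eq_ga|]; last by rewrite mulr0.
have := hom_lt g (i := ord0) (j := lift ord0 ord0) isT.
by rewrite g0 -cofaceE -hcompE eq_ga a0.
Qed.

Lemma contractR_homotopy_ebasis x n (h : Hom x.+1 n) :
  comp (contractR (ebasis h)) (bd k x.+1) + contractR (comp (ebasis h) (bd k x)) = ebasis h.
Proof.
have [h0 | /cone_exists[g g0 <-]] := eqVneq (val (val h ord0)) 0%N.
  rewrite contractR_eq0 // comp0l add0r comp_ebasis_bd linear_sum big_ord_recl /=.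
  rewrite linearZ /= contractR_cone // expr0 scale1r big1 ?addr0 // => i _.
  by rewrite linearZ /= contractR_eq0 ?scaler0 // hcompE cofaceE lift_lift0.
rewrite contractR_cone // comp_ebasis_bd big_ord_recl expr0 scale1r comp_ebasis_bd linear_sum.
rewrite -addrA [X in _ + X]addrC -big_split big1 ?addr0 //= => i _.
rewrite -hcompA -(@coface_comm _ i ord0 (lift ord0 i) ord0) // hcompA.
rewrite linearZ /= contractR_cone; last by rewrite hcompE cofaceE lift_lift0.
by rewrite exprS mulN1r scaleNr; apply/eqP; rewrite subr_eq0.
Qed.

Lemma contractR_homotopy x n (F : kHom x.+1 n) :
  comp (contractR F) (bd k x.+1) + contractR (comp F (bd k x)) = F.
Proof.
rewrite [F in RHS]kHom_expand [F in LHS]kHom_expand linear_sum comp_suml comp_suml.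
rewrite linear_sum -big_split; apply: eq_bigr => a _ /=.
by rewrite linearZ /= compZl compZl linearZ /= -scalerDr contractR_homotopy_ebasis.
Qed.

Definition dL x y : 'Hom(kHom x y, kHom x y.+1) := linfun (comp (bd k y)).

(* At [y = 0] the source is [kHom x 0.-1 = kHom x 0] and the map is 0, so that
   [genL x 0] below is a basis of the whole of [kHom x 0]. *)
Definition dLin x y : 'Hom(kHom x y.-1, kHom x y) :=
  if y is y'.+1 then dL x y' else 0.

Definition dR y x : 'Hom(kHom x.+1 y, kHom x y) := linfun (compr (bd k x)).

Lemma limg_dLin x z : limg (dLin x z) = lker (dL x z).
Proof.
apply/vspaceP; case: z => [|z] v; apply/idP/idP => [/memv_imgP[u _ ->] | ].
- by rewrite memv_ker /= zero_lfunE linear0.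
- by rewrite memv_ker lfunE /= => /eqP dv; rewrite -(contractL_homotopy0 v) dv linear0 mem0v.
- by rewrite memv_ker /= !lfunE /= compA bd_bd comp0l.
rewrite memv_ker lfunE /= => /eqP dv.
apply/memv_imgP; exists (contractL v); rewrite ?memvf //= lfunE /=.
by rewrite -[LHS](contractL_homotopy v) dv linear0 add0r.
Qed.

Lemma limg_dR y x : limg (dR y x.+1) = lker (dR y x).
Proof.
apply/vspaceP=> v; apply/idP/idP => [/memv_imgP[u _ ->] | ].
  by rewrite memv_ker !lfunE /= /compr -compA bd_bd linear0.
rewrite memv_ker lfunE /= /compr => /eqP dv.
apply/memv_imgP; exists (contractR v); rewrite ?memvf // lfunE /= /compr.
by rewrite -[LHS](contractR_homotopy v) dv linear0 addr0.
Qed.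

Section LeftFree.
Variable x : nat.

Definition genL z : seq (kHom x z) := vbasis (limg (dLin x z))^C%VS.

Lemma sum_comp_upathL y (c : forall z : 'I_y.+2, 'I_(size (genL z)) -> k) :
  \sum_z \sum_j comp (c z j *: upath k z y.+1) (genL z)`_j =
  \sum_j c ord_max j *: (genL y.+1)`_j +
  dL x y (\sum_j c (widen_ord (leqnSn _) ord_max) j *: (genL y)`_j).
Proof.
under eq_bigr => z _ do rewrite sum_compZl.
rewrite big_ord_recr /= upath_id comp_kidl addrC; congr (_ + _).
rewrite big_ord_recr /= upath_bd lfunE /= big1 ?add0r // => z _.
by rewrite upath_far ?comp0l //= ltnS ltn_ord.
Qed.

Lemma genL_spans y (f : kHom x y) :
  exists a : forall z : 'I_y.+1, 'I_(size (genL z)) -> kHom z y,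
    (forall z j, in_image (a z j)) /\ f = \sum_z \sum_j comp (a z j) (genL z)`_j.
Proof.
have [b bC [v vC ->]] := limg_lker_compl_decomp (dLin x y) f.
have [al ->] := coord_vbasis_nat bC; clear f b bC.
case: y v vC => [|y] v vC.
  exists (fun z j => al j *: upath k z 0); split=> [z j|]; first by exists (al j).
  by rewrite big_ord1 zero_lfunE addr0 (@sum_compZl x 0 0) upath_id comp_kidl.
rewrite -limg_dLin in vC; have [be ->] := coord_vbasis_nat vC.
pose c (z : 'I_y.+2) (j : 'I_(size (genL z))) := if val z == y.+1 then al j else be j.
exists (fun z j => c z j *: upath k z y.+1); split=> [z j|]; first by eexists.
by rewrite (sum_comp_upathL c) /c /= eqxx (ltn_eqF (ltnSn y)).
Qed.

Lemma genL_free y (a : forall z : 'I_y.+1, 'I_(size (genL z)) -> kHom z y) :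
  (forall z j, in_image (a z j)) ->
  \sum_z \sum_j comp (a z j) (genL z)`_j = 0 -> forall z j, a z j = 0.
Proof.
move=> a_im; have {}a_im z j : exists c, a z j == c *: upath k z y.
  by case: (a_im z j) => c ->; exists c.
pose c z j := xchoose (a_im z j).
have ac z j : a z j = c z j *: upath k z y := eqP (xchooseP (a_im z j)).
under eq_bigr => z _ do under eq_bigr => j _ do rewrite ac.
case: y a a_im c ac => [|y] a _ c ac.
  rewrite big_ord1 (@sum_compZl x 0 0) upath_id comp_kidl => /free_vbasis_coord c0 z.
  by rewrite (ord1 z) => j; rewrite ac c0 scale0r.
rewrite sum_comp_upathL.
move=> /limg_lker_compl_decomp_eq0[||/free_vbasis_coord c1 /free_vbasis_coord c2].
- exact: vbasis_comb_mem.
- by rewrite -limg_dLin; apply: vbasis_comb_mem.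
move=> z; case: (eqVneq z ord_max) => [-> j | ne_max]; first by rewrite ac c1 scale0r.
case: (eqVneq z (widen_ord (leqnSn _) ord_max)) => [-> j | ne_pred j].
  by rewrite ac c2 scale0r.
rewrite ac upath_far ?scaler0 //; have := ltn_ord z.
by move: ne_max ne_pred; rewrite -!val_eqE /=; lia.
Qed.

End LeftFree.

Section RightFree.
Variable y : nat.

Definition genR z : seq (kHom z y) := vbasis (limg (dR y z))^C%VS.

Lemma sum_comp_upathR_top (c : forall z : 'I_y.+1, 'I_(size (genR z)) -> k) :
  \sum_(z < y.+1) \sum_(j < size (genR z)) comp (genR z)`_j (c z j *: upath k y z) =
  \sum_j c ord_max j *: (genR y)`_j.
Proof.
under eq_bigr => z _ do rewrite sum_compZr.
rewrite big_ord_recr /= upath_id comp_kidr big1 ?add0r // => z _.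
by rewrite upath_gt ?linear0.
Qed.

Lemma sum_comp_upathR x (lt_xy : (x < y)%N)
    (c : forall z : 'I_y.+1, 'I_(size (genR z)) -> k) :
  \sum_(z < y.+1) \sum_(j < size (genR z)) comp (genR z)`_j (c z j *: upath k x z) =
  \sum_j c (Ordinal (ltnW lt_xy : (x < y.+1)%N)) j *: (genR x)`_j +
  dR y x (\sum_j c (Ordinal (lt_xy : (x.+1 < y.+1)%N)) j *: (genR x.+1)`_j).
Proof.
under eq_bigr => z _ do rewrite sum_compZr.
rewrite (bigD1 (Ordinal (ltnW lt_xy : (x < y.+1)%N))) //.
rewrite (bigD1 (Ordinal (lt_xy : (x.+1 < y.+1)%N))) /=; last by rewrite -val_eqE /= gtn_eqF.
rewrite upath_id upath_bd comp_kidr lfunE [X in _ + (_ + X) = _]big1 ?addr0 //.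
move=> z /andP[ne_x1 ne_x].
move: ne_x ne_x1; rewrite -!val_eqE /= => ne_x ne_x1.
have [lt_zx | lt_xz] := ltnP z x; first by rewrite upath_gt ?linear0.
by rewrite upath_far ?linear0 //; lia.
Qed.

Lemma genR_spans x (f : kHom x y) :
  exists a : forall z : 'I_y.+1, 'I_(size (genR z)) -> kHom x z,
    (forall z j, in_image (a z j)) /\
    f = \sum_(z < y.+1) \sum_(j < size (genR z)) comp (genR z)`_j (a z j).
Proof.
have [lt_yx | le_xy] := ltnP y x.
  exists (fun z j => 0); split=> [z j|]; first by exists 0; rewrite scale0r.
  by rewrite (kHom_eq0 f lt_yx) big1 // => z _; rewrite big1 // => j _; rewrite linear0.
have [b bC [v vC ->]] := limg_lker_compl_decomp (dR y x) f.
have [al ->] := coord_vbasis_nat bC; clear f b bC.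
case: (ltngtP x y) le_xy => // [lt_xy | eq_xy] _; last first.
  subst x; pose c (z : 'I_y.+1) (j : 'I_(size (genR z))) := al j.
  exists (fun z j => c z j *: upath k y z); split=> [z j|]; first by eexists.
  by rewrite (kHom_eq0 v (ltnSn y)) linear0 addr0 (sum_comp_upathR_top c).
rewrite -limg_dR in vC; have [be ->] := coord_vbasis_nat vC.
pose c (z : 'I_y.+1) (j : 'I_(size (genR z))) := if val z == x then al j else be j.
exists (fun z j => c z j *: upath k x z); split=> [z j|]; first by eexists.
by rewrite (sum_comp_upathR lt_xy c) /c /= eqxx gtn_eqF.
Qed.

Lemma genR_free x (a : forall z : 'I_y.+1, 'I_(size (genR z)) -> kHom x z) :
  (forall z j, in_image (a z j)) ->
  \sum_(z < y.+1) \sum_(j < size (genR z)) comp (genR z)`_j (a z j) = 0 ->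
  forall z j, a z j = 0.
Proof.
move=> a_im; have {}a_im z j : exists c, a z j == c *: upath k x z.
  by case: (a_im z j) => c ->; exists c.
pose c z j := xchoose (a_im z j).
have ac z j : a z j = c z j *: upath k x z := eqP (xchooseP (a_im z j)).
under eq_bigr => z _ do under eq_bigr => j _ do rewrite ac.
have [lt_yx | le_xy] := ltnP y x.
  by move=> _ z j; rewrite ac upath_gt ?scaler0 // (leq_ltn_trans (leq_ord z)).
case: (ltngtP x y) le_xy => // [lt_xy | eq_xy] _; last first.
  subst x; rewrite sum_comp_upathR_top => /free_vbasis_coord c0 z.
  case: (eqVneq z ord_max) => [-> j | ne_max j]; first by rewrite ac c0 scale0r.
  rewrite ac upath_gt ?scaler0 //; have := ltn_ord z.
  by move: ne_max; rewrite -val_eqE /=; lia.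
rewrite sum_comp_upathR.
move=> /limg_lker_compl_decomp_eq0[||/free_vbasis_coord c1 /free_vbasis_coord c2].
- exact: vbasis_comb_mem.
- by rewrite -limg_dR; apply: vbasis_comb_mem.
move=> z; case: (eqVneq z (Ordinal (ltnW lt_xy : (x < y.+1)%N))) => [-> j | ne_x].
  by rewrite ac c1 scale0r.
case: (eqVneq z (Ordinal (lt_xy : (x.+1 < y.+1)%N))) => [-> j | ne_x1 j].
  by rewrite ac c2 scale0r.
rewrite ac; move: ne_x ne_x1; rewrite -!val_eqE /= => ne_x ne_x1.
have [lt_zx | le_xz] := ltnP z x; first by rewrite upath_gt ?scaler0.
by rewrite upath_far ?scaler0 //; lia.
Qed.

End RightFree.

End Linearization.

Theorem lemma2p1 (k : fieldType) : left_free k /\ right_free k.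
Proof.
split=> [x | y]; [exists (genL k x) | exists (genR k y)] => n.
  by split; [exact: genL_spans | exact: genL_free].
by split; [exact: genR_spans | exact: genR_free].
Qed.
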